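(* Let $(S^\Omega,\mathcal T)$ be a resource theory with a fair currency $\mathcal C$ (value function $\mathrm{Val}$) for a target $\mathcal S$. Then for all $V,W\in\mathcal S$ and every $\varepsilon>0$, $$\mathrm{Balance}(V\to W)\ge\mathrm{Yield}(V)-\mathrm{Cost}(W)-\varepsilon,$$ and the same holds with $\varepsilon=0$ when $\mathrm{Yield}(V)$ and $\mathrm{Cost}(W)$ are attained by currency elements. If moreover $\mathcal C$ is tight for both $V$ and $W$, then $$\mathrm{Balance}(V\to W)=\mathrm{Yield}(V)-\mathrm{Cost}(W)=\mathrm{Cost}(V)-\mathrm{Cost}(W).$$
   Context: A resource theory $(S^\Omega,\mathcal T)$ consists of a set $\Omega$, the specification space $S^\Omega$ of all non-empty subsets of $\Omega$ (resources), and a set $\mathcal T$ of maps $f:S^\Omega\to S^\Omega$ acting element-wise, $f(V)=\bigcup_{\nu\in V} f(\{\nu\})$. $V\to W$ iff some $f\in\mathcal T$ has $f(V)\subseteq W$; $\to$ is assumed to be a pre-order. $\mathcal C\subseteq S^\Omega$ is a currency for target $\mathcal S\subseteq S^\Omega$ if (Order) any two elements of $\mathcal C$ are comparable under $\to$ and $\Omega\in\mathcal C$; (Universality) $\Omega\in\mathcal S$ and every $V\in\mathcal S$ has $C,C'\in\mathcal C$ with $C\to V$, $V\to C'$. A value function $\mathrm{Val}:\mathcal C\to\mathbb R_{\ge0}$ satisfies $\mathrm{Val}(C')\ge\mathrm{Val}(C)\iff C'\to C$ and $\mathrm{Val}(\Omega)=0$; $c_{\sup}=\sup_{C\in\mathcal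 C}\mathrm{Val}(C)$ (possibly $\infty$). $\mathrm{Cost}(V)=\inf\{\mathrm{Val}(C): C\in\mathcal C,\ C\to V\}$, $\mathrm{Yield}(V)=\sup\{\mathrm{Val}(C): C\in\mathcal C,\ V\to C\}$. The currency is tight for $V$ if there is $C\in\mathcal C$ with $C\to V$ and $V\to C$. Independence: $C\cap V\ne\emptyset$ for all $C\in\mathcal C,V\in\mathcal S$, and $C\to C'$ implies $C\cap V\to C'\cap V$ for all $V\in\mathcal S$. Balance: $\mathrm{Balance}(V\to W\mid C)=\sup\{\mathrm{Val}(C')-\mathrm{Val}(C): C'\in\mathcal C,\ V\cap C\to W\cap C'\}$ (with $\sup\emptyset=-\infty$) and $\mathrm{Balance}(V\to W)=\sup_{C\in\mathcal C}\mathrm{Balance}(V\to W\mid C)$. Fairness: $\mathcal C$ is independent of $\mathcal S$, and for all $V,W\in\mathcal S$ and $C_1,C_2\in\mathcal C$ with $V\cap C_1\to W\cap C_2$, setting $\Delta=\mathrm{Val}(C_2)-\mathrm{Val}(C_1)$: (F1) for every $C_1'\in\mathcal C$ with $-\Delta\le\mathrm{Val}(C_1')<c_{\sup}-\Delta$ there is $C_2'\in\mathcal C$ with $V\cap C_1'\to W\cap C_2'$ and $\mathrm{Val}(C_2')-\mathrm{Val}(C_1')=\Delta$; (F2) for every $C_2'\in\mathcal C$ with $\Delta\le\mathrm{Val}(C_2')$ there is $C_1'\in\mathcal C$ with $V\cap C_1'\to W\cap C_2'$ and $\mathrm{Val}(C_2')-\mathrm{Val}(C_1')=\Delta$. *)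

From Stdlib Require Import Reals Lra Classical ClassicalEpsilon.
Open Scope R_scope.
Set Implicit Arguments.
Unset Strict Implicit.

Inductive Rbar : Type := Fin (r : R) | PInf | MInf.

Definition Rbar_le (x y : Rbar) : Prop :=
  match x, y with
  | MInf, _ => True
  | _, PInf => True
  | Fin a, Fin b => a <= b
  | _, _ => False
  end.

Definition Rbar_lt (x y : Rbar) : Prop := Rbar_le x y /\ x <> y.

Definition Rbar_opp (x : Rbar) : Rbar :=
  match x with Fin a => Fin (- a) | PInf => MInf | MInf => PInf end.

(* The case PInf + MInf never occurs below (Cost is always finite);
   we fix an arbitrary convention for it. *)
Definition Rbar_plus (x y : Rbar) : Rbar :=
  match x, y with
  | Fin a, Fin b => Fin (a + b)
  | PInf, MInf | MInf, PInf => MInf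
  | PInf, _ | _, PInf => PInf
  | _, _ => MInf
  end.

Definition Rbar_minus (x y : Rbar) : Rbar := Rbar_plus x (Rbar_opp y).

Definition is_sup_Rbar (P : Rbar -> Prop) (s : Rbar) : Prop :=
  (forall x, P x -> Rbar_le x s) /\
  (forall u, (forall x, P x -> Rbar_le x u) -> Rbar_le s u).

Definition is_inf_Rbar (P : Rbar -> Prop) (s : Rbar) : Prop :=
  (forall x, P x -> Rbar_le s x) /\
  (forall u, (forall x, P x -> Rbar_le u x) -> Rbar_le u s).

(* sup / inf (they always exist in the extended reals; sup of the empty set is MInf) *)
Definition Rbar_sup (P : Rbar -> Prop) : Rbar :=
  epsilon (inhabits MInf) (is_sup_Rbar P).
Definition Rbar_inf (P : Rbar -> Prop) : Rbar :=
  epsilon (inhabits PInf) (is_inf_Rbar P).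

Section RT.
Variable Omega : Type.

(* subsets of Omega; the specification space S^Omega = non-empty subsets *)
Definition rset := Omega -> Prop.
Definition nonempty (V : rset) : Prop := exists x, V x.
Definition fullset : rset := fun _ => True.
Definition inter (V W : rset) : rset := fun x => V x /\ W x.
Definition subset (V W : rset) : Prop := forall x, V x -> W x.

(* A map f : S^Omega -> S^Omega acting element-wise is determined by
   nu |-> f({nu}); we represent it by that function  g : Omega -> rset,
   so that f(V) = \bigcup_{nu in V} g nu. *)
Definition elem_map := Omega -> rset.
Definition apply_map (g : elem_map) (V : rset) : rset :=
  fun y => exists nu, V nu /\ g nu y.

Definition reaches (T : elem_map -> Prop) (V W : rset) : Prop :=
  exists g, T g /\ subset (apply_map g V) W.

(* (S^Omega, T) is a resource theory: maps send S^Omega into S^Omega,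
   and -> is a pre-order on S^Omega. *)
Definition is_resource_theory (T : elem_map -> Prop) : Prop :=
  (forall g, T g -> forall nu, nonempty (g nu)) /\
  (forall V, nonempty V -> reaches T V V) /\
  (forall U V W, nonempty U -> nonempty V -> nonempty W ->
     reaches T U V -> reaches T V W -> reaches T U W).

Variable T : elem_map -> Prop.
Variable Cc : rset -> Prop.
Variable Ss : rset -> Prop.
Variable Val : rset -> R.     (* value function, relevant on C only *)

Definition is_currency : Prop :=
  (forall C, Cc C -> nonempty C) /\
  (forall V, Ss V -> nonempty V) /\
  (forall C C', Cc C -> Cc C' -> reaches T C C' \/ reaches T C' C) /\
  Cc fullset /\
  Ss fullset /\
  (forall V, Ss V ->
     (exists C, Cc C /\ reaches T C V) /\ (exists C', Cc C' /\ reaches T V C')).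

Definition is_value_function : Prop :=
  (forall C, Cc C -> 0 <= Val C) /\
  (forall C C', Cc C -> Cc C' -> (Val C' >= Val C <-> reaches T C' C)) /\
  Val fullset = 0.

Definition c_sup : Rbar := Rbar_sup (fun x => exists C, Cc C /\ x = Fin (Val C)).

Definition Cost (V : rset) : Rbar :=
  Rbar_inf (fun x => exists C, Cc C /\ reaches T C V /\ x = Fin (Val C)).

Definition Yield (V : rset) : Rbar :=
  Rbar_sup (fun x => exists C, Cc C /\ reaches T V C /\ x = Fin (Val C)).

Definition tight_for (V : rset) : Prop :=
  exists C, Cc C /\ reaches T C V /\ reaches T V C.

Definition independent : Prop :=
  (forall C V, Cc C -> Ss V -> nonempty (inter C V)) /\
  (forall C C', Cc C -> Cc C' -> reaches T C C' ->
     forall V, Ss V -> reaches T (inter C V) (inter C' V)).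

(* Balance(V -> W | C) ; sup of the empty set is MInf *)
Definition Balance_cond (V W C : rset) : Rbar :=
  Rbar_sup (fun x => exists C', Cc C' /\
     reaches T (inter V C) (inter W C') /\ x = Fin (Val C' - Val C)).

Definition Balance (V W : rset) : Rbar :=
  Rbar_sup (fun x => exists C, Cc C /\ x = Balance_cond V W C).

Definition is_fair : Prop :=
  independent /\
  forall V W C1 C2, Ss V -> Ss W -> Cc C1 -> Cc C2 ->
    reaches T (inter V C1) (inter W C2) ->
    let Delta := Val C2 - Val C1 in
    (* (F1) *)
    (forall C1', Cc C1' -> - Delta <= Val C1' ->
        Rbar_lt (Fin (Val C1')) (Rbar_minus c_sup (Fin Delta)) ->
        exists C2', Cc C2' /\ reaches T (inter V C1') (inter W C2') /\
                    Val C2' - Val C1' = Delta) /\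
    (* (F2) *)
    (forall C2', Cc C2' -> Delta <= Val C2' ->
        exists C1', Cc C1' /\ reaches T (inter V C1') (inter W C2') /\
                    Val C2' - Val C1' = Delta).

End RT.

(* Fairness lets one trade a pure currency element Ω∩C for any other one at a
   fixed offset in value.  Chaining V → C_y and C_w → W through such trades
   yields a transformation V∩C_1 → W∩C_2 with net gain Val C_2 - Val C_1 equal
   to Val C_y - Val C_w, and approximating Yield V and Cost W from inside gives
   the lower bound.  Conversely, if C_0 → V and W → D_0, every V∩C → W∩C' can be
   sandwiched between two pure currency elements, and monotonicity of Val bounds
   its gain by Val C_0 - Val D_0.  For tight V and W the two bounds meet. *)

From Stdlib Require Import Reals Lra Classical ClassicalEpsilon.
Open Scope R_scope.
Set Implicit Arguments.
Unset Strict Implicit.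

Section ExtendedReals.

Lemma Rbar_le_trans x y z : Rbar_le x y -> Rbar_le y z -> Rbar_le x z.
Proof. destruct x, y, z; cbn; intros; try tauto; lra. Qed.

Lemma Rbar_le_antisym x b : Rbar_le x (Fin b) -> Rbar_le (Fin b) x -> x = Fin b.
Proof. destruct x; cbn; intros; try contradiction. f_equal; lra. Qed.

Lemma Rbar_not_le x y : ~ Rbar_le x y -> Rbar_le y x.
Proof. destruct x, y; cbn; intros; try tauto; lra. Qed.

Lemma Rbar_le_fin_between a b x :
  Rbar_le (Fin a) x -> Rbar_le x (Fin b) -> exists y, x = Fin y.
Proof. destruct x; cbn; intros; try contradiction. now exists r. Qed.

Lemma Rbar_le_opp x y : Rbar_le (Rbar_opp x) (Rbar_opp y) <-> Rbar_le y x.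
Proof. destruct x, y; cbn; split; intros; try tauto; lra. Qed.

Lemma Rbar_opp_involutive x : Rbar_opp (Rbar_opp x) = x.
Proof. destruct x; cbn; auto; now rewrite Ropp_involutive. Qed.

Lemma is_sup_Rbar_exists (P : Rbar -> Prop) : exists s, is_sup_Rbar P s.
Proof.
  destruct (classic (P PInf)) as [HP|HnP].
  { exists PInf; split; [intros [] _; exact I | intros u Hu; exact (Hu _ HP)]. }
  destruct (classic (exists a, P (Fin a))) as [[a Ha]|Hempty].
  - destruct (classic (exists b, forall r, P (Fin r) -> r <= b)) as [[b Hb]|Hunb].
    + destruct (completeness (fun r => P (Fin r))) as [l [Hub Hlub]].
      { now exists b. }
      { now exists a. }
      exists (Fin l); split.
      * intros [r| |] Hx; cbn; [now apply Hub | contradiction | exact I].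
      * intros [c| |] Hu; cbn; auto.
        -- apply Hlub; intros r Hr; exact (Hu _ Hr).
        -- exact (Hu _ Ha).
    + exists PInf; split.
      * intros [] _; exact I.
      * intros [c| |] Hu; cbn; auto.
        -- apply Hunb; exists c; intros r Hr; exact (Hu _ Hr).
        -- exact (Hu _ Ha).
  - exists MInf; split.
    + intros [r| |] Hx; cbn; auto. apply Hempty; now exists r.
    + intros u _; exact I.
Qed.

Lemma is_inf_Rbar_exists (P : Rbar -> Prop) : exists s, is_inf_Rbar P s.
Proof.
  destruct (is_sup_Rbar_exists (fun x => P (Rbar_opp x))) as [s [Hub Hlub]].
  exists (Rbar_opp s); split.
  - intros x Hx. rewrite <- (Rbar_opp_involutive x). apply Rbar_le_opp, Hub.
    now rewrite Rbar_opp_involutive.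
  - intros u Hu. rewrite <- (Rbar_opp_involutive u). apply Rbar_le_opp, Hlub.
    intros x Hx. rewrite <- (Rbar_opp_involutive x). now apply Rbar_le_opp, Hu.
Qed.

Variable P : Rbar -> Prop.

Lemma Rbar_sup_spec : is_sup_Rbar P (Rbar_sup P).
Proof. unfold Rbar_sup; apply epsilon_spec, is_sup_Rbar_exists. Qed.

Lemma Rbar_inf_spec : is_inf_Rbar P (Rbar_inf P).
Proof. unfold Rbar_inf; apply epsilon_spec, is_inf_Rbar_exists. Qed.

Lemma Rbar_sup_ub x : P x -> Rbar_le x (Rbar_sup P).
Proof. apply Rbar_sup_spec. Qed.

Lemma Rbar_sup_lub u : (forall x, P x -> Rbar_le x u) -> Rbar_le (Rbar_sup P) u.
Proof. apply Rbar_sup_spec. Qed.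

Lemma Rbar_inf_lb x : P x -> Rbar_le (Rbar_inf P) x.
Proof. apply Rbar_inf_spec. Qed.

Lemma Rbar_inf_glb u : (forall x, P x -> Rbar_le u x) -> Rbar_le u (Rbar_inf P).
Proof. apply Rbar_inf_spec. Qed.

Lemma Rbar_sup_approx y eps :
  Rbar_sup P = Fin y -> 0 < eps -> exists x, P x /\ Rbar_le (Fin (y - eps)) x.
Proof.
  intros Hy Heps. apply NNPP; intros Hnone.
  assert (Hle : Rbar_le (Rbar_sup P) (Fin (y - eps))).
  { apply Rbar_sup_lub; intros x Hx.
    apply Rbar_not_le; intros Hx'; apply Hnone; now exists x. }
  rewrite Hy in Hle; cbn in Hle; lra.
Qed.

Lemma Rbar_inf_approx y eps :
  Rbar_inf P = Fin y -> 0 < eps -> exists x, P x /\ Rbar_le x (Fin (y + eps)).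
Proof.
  intros Hy Heps. apply NNPP; intros Hnone.
  assert (Hle : Rbar_le (Fin (y + eps)) (Rbar_inf P)).
  { apply Rbar_inf_glb; intros x Hx.
    apply Rbar_not_le; intros Hx'; apply Hnone; now exists x. }
  rewrite Hy in Hle; cbn in Hle; lra.
Qed.

End ExtendedReals.

Lemma reaches_mono Omega (T : elem_map Omega -> Prop) A B A' B' :
  reaches T A B -> subset A' A -> subset B B' -> reaches T A' B'.
Proof.
  intros [g [Tg Hg]] HA HB. exists g; split; auto.
  intros y [nu [Hnu Hy]]. apply HB, Hg. exists nu; auto.
Qed.

Section FairCurrency.

Variable Omega : Type.
Variable T : elem_map Omega -> Prop.
Variables Cc Ss : rset Omega -> Prop.
Variable Val : rset Omega -> R.
Hypothesis HT : is_resource_theory T.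
Hypothesis HC : is_currency T Cc Ss.
Hypothesis HVal : is_value_function T Cc Val.
Hypothesis Hfair : is_fair T Cc Ss Val.

Local Notation full := (@fullset Omega).
Local Notation "V ~> W" := (reaches T V W) (at level 70).

Lemma currency_full : Cc full.
Proof. now destruct HC as (_ & _ & _ & H & _). Qed.

Lemma target_full : Ss full.
Proof. now destruct HC as (_ & _ & _ & _ & H & _). Qed.

Lemma target_universal V :
  Ss V -> (exists C, Cc C /\ C ~> V) /\ (exists C, Cc C /\ V ~> C).
Proof. destruct HC as (_ & _ & _ & _ & _ & H). apply H. Qed.

Lemma Val_ge0 C : Cc C -> 0 <= Val C.
Proof. destruct HVal as [H _]. apply H. Qed.

Lemma Val_full : Val full = 0.
Proof. now destruct HVal as (_ & _ & H). Qed.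

Lemma Val_le_of_reaches C C' : Cc C -> Cc C' -> C' ~> C -> Val C <= Val C'.
Proof.
  intros HC1 HC2 H. destruct HVal as (_ & Hmono & _).
  apply Rge_le, (Hmono C C' HC1 HC2), H.
Qed.

Lemma reaches_of_Val_le C C' : Cc C -> Cc C' -> Val C <= Val C' -> C' ~> C.
Proof.
  intros HC1 HC2 H. destruct HVal as (_ & Hmono & _).
  apply (Hmono C C' HC1 HC2). lra.
Qed.

Lemma nonempty_inter V C : Ss V -> Cc C -> nonempty (inter V C).
Proof.
  intros HV HC1. destruct Hfair as [[Hne _] _].
  destruct (Hne C V HC1 HV) as [x [H1 H2]]. now exists x.
Qed.

Lemma reaches_trans_inter X C Y D Z E :
  Ss X -> Cc C -> Ss Y -> Cc D -> Ss Z -> Cc E ->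
  inter X C ~> inter Y D -> inter Y D ~> inter Z E -> inter X C ~> inter Z E.
Proof.
  intros. destruct HT as (_ & _ & Htrans).
  apply (Htrans _ (inter Y D)); auto using nonempty_inter.
Qed.

Lemma reaches_trans_currency C V C' :
  Cc C -> Ss V -> Cc C' -> C ~> V -> V ~> C' -> C ~> C'.
Proof.
  intros HC1 HV HC2. destruct HT as (_ & _ & Htrans).
  destruct HC as (Hcne & Hsne & _). apply Htrans; auto.
Qed.

Lemma reaches_inter_currency X C C' :
  Ss X -> Cc C -> Cc C' -> Val C' <= Val C -> inter X C ~> inter X C'.
Proof.
  intros HX HC1 HC2 Hle. destruct Hfair as [[_ Hind] _].
  eapply reaches_mono.
  - apply (Hind C C' HC1 HC2 (reaches_of_Val_le HC2 HC1 Hle) X HX).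
  - intros x [H1 H2]; now split.
  - intros x [H1 H2]; now split.
Qed.

(* Condition (F2). *)
Lemma fair_shift V W C1 C2 C2' :
  Ss V -> Ss W -> Cc C1 -> Cc C2 -> Cc C2' ->
  inter V C1 ~> inter W C2 -> Val C2 - Val C1 <= Val C2' ->
  exists C1', Cc C1' /\ inter V C1' ~> inter W C2' /\
              Val C2' - Val C1' = Val C2 - Val C1.
Proof.
  intros HV HW HC1 HC2 HC2' H Hle. destruct Hfair as [_ Hf].
  pose proof (Hf V W C1 C2 HV HW HC1 HC2 H) as Hshift; cbv zeta in Hshift.
  now apply Hshift.
Qed.

Lemma fair_from_currency C0 X C :
  Cc C0 -> Ss X -> C0 ~> X -> Cc C ->
  exists M, Cc M /\ inter full M ~> inter X C /\ Val M = Val C0 + Val C.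
Proof.
  intros HC0 HX H0 HC1.
  assert (H0' : inter full C0 ~> inter X full).
  { eapply reaches_mono; [exact H0 | now intros x [_ Hx] | now intros x Hx]. }
  destruct (fair_shift target_full HX HC0 currency_full HC1 H0') as (M & HM & HMC & E).
  - rewrite Val_full. pose proof (Val_ge0 HC0); pose proof (Val_ge0 HC1); lra.
  - exists M; repeat split; auto. rewrite Val_full in E; lra.
Qed.

Lemma fair_to_currency X C0 C :
  Ss X -> Cc C0 -> X ~> C0 -> Cc C -> Val C0 <= Val C ->
  exists N, Cc N /\ inter X N ~> inter full C /\ Val N = Val C - Val C0.
Proof.
  intros HX HC0 H0 HC1 Hle.
  assert (H0' : inter X full ~> inter full C0).
  { eapply reaches_mono; [exact H0 | now intros x [Hx _] | now intros x Hx]. }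
  destruct (fair_shift HX target_full currency_full HC0 HC1 H0') as (N & HN & HNC & E).
  - now rewrite Val_full, Rminus_0_r.
  - exists N; repeat split; auto. rewrite Val_full in E; lra.
Qed.

Lemma currency_add A B :
  Cc A -> Cc B -> exists S, Cc S /\ Val S = Val A + Val B.
Proof.
  intros HA HB.
  assert (HAfull : A ~> full).
  { apply reaches_of_Val_le; auto using currency_full.
    rewrite Val_full; now apply Val_ge0. }
  destruct (fair_from_currency HA target_full HAfull HB) as (S & HS & _ & E).
  now exists S.
Qed.

Lemma Balance_ge V W C1 C2 :
  Cc C1 -> Cc C2 -> inter V C1 ~> inter W C2 ->
  Rbar_le (Fin (Val C2 - Val C1)) (Balance T Cc Val V W).
Proof.
  intros HC1 HC2 H. apply Rbar_le_trans with (Balance_cond T Cc Val V W C1).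
  - apply Rbar_sup_ub. now exists C2.
  - apply Rbar_sup_ub. now exists C1.
Qed.

Lemma Balance_le V W b :
  (forall C C', Cc C -> Cc C' -> inter V C ~> inter W C' -> Val C' - Val C <= b) ->
  Rbar_le (Balance T Cc Val V W) (Fin b).
Proof.
  intros Hb. apply Rbar_sup_lub; intros x [C [HC1 ->]].
  apply Rbar_sup_lub; intros x [C' (HC2 & H & ->)]. cbn. auto.
Qed.

Lemma Balance_ge_of_reaches V W Cy Cw :
  Ss V -> Ss W -> Cc Cy -> Cc Cw -> V ~> Cy -> Cw ~> W ->
  Rbar_le (Fin (Val Cy - Val Cw)) (Balance T Cc Val V W).
Proof.
  intros HV HW HCy HCw Hy Hw.
  destruct (fair_from_currency HCw HW Hw HCy) as (M & HM & HMW & EM).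
  destruct (fair_to_currency HV HCy Hy HM) as (N & HN & HVN & EN).
  { pose proof (Val_ge0 HCw); lra. }
  replace (Val Cy - Val Cw) with (Val Cy - Val N) by lra.
  apply Balance_ge; auto.
  apply (reaches_trans_inter (Y := full) (D := M));
    auto using target_full.
Qed.

Lemma Balance_le_of_reaches V W C0 D0 :
  Ss V -> Ss W -> Cc C0 -> Cc D0 -> C0 ~> V -> W ~> D0 ->
  Rbar_le (Balance T Cc Val V W) (Fin (Val C0 - Val D0)).
Proof.
  intros HV HW HC0 HD0 H0 HD. apply Balance_le; intros C C' HC1 HC2 H.
  destruct (fair_from_currency HC0 HV H0 HC1) as (M & HM & HMV & EM).
  destruct (currency_add HD0 HC2) as (Z & HZ & EZ).
  destruct (fair_to_currency HW HD0 HD HZ) as (N & HN & HWN & EN).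
  { pose proof (Val_ge0 HC2); lra. }
  (* Val N = Val C', so Ω∩M → V∩C → W∩C' → W∩N → Ω∩Z. *)
  assert (HMZ : inter full M ~> inter full Z).
  { assert (HCN : inter W C' ~> inter W N)
      by (apply reaches_inter_currency; auto; lra).
    apply (reaches_trans_inter (Y := V) (D := C)); auto using target_full.
    apply (reaches_trans_inter (Y := W) (D := C')); auto using target_full.
    apply (reaches_trans_inter (Y := W) (D := N)); auto using target_full. }
  assert (Hle : Val Z <= Val M).
  { apply Val_le_of_reaches; auto.
    eapply reaches_mono; [exact HMZ | now intros x Hx | now intros x [_ Hx]]. }
  lra.
Qed.

Lemma Yield_finite V : Ss V -> exists y, Yield T Cc Val V = Fin y.
Proof.
  intros HV. destruct (target_universal HV) as [[C1 [HC1 H1]] [C2 [HC2 H2]]].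
  unfold Yield; apply (@Rbar_le_fin_between (Val C2) (Val C1)).
  - apply Rbar_sup_ub. now exists C2.
  - apply Rbar_sup_lub; intros x (C & HC3 & H & ->). cbn.
    apply Val_le_of_reaches; auto.
    apply (reaches_trans_currency (V := V)); auto.
Qed.

Lemma Cost_finite W : Ss W -> exists k, Cost T Cc Val W = Fin k.
Proof.
  intros HW. destruct (target_universal HW) as [[C1 [HC1 H1]] _].
  unfold Cost; apply (@Rbar_le_fin_between 0 (Val C1)).
  - apply Rbar_inf_glb; intros x (C & HC2 & H & ->). cbn. now apply Val_ge0.
  - apply Rbar_inf_lb. now exists C1.
Qed.

Lemma Yield_approx V y eps :
  Yield T Cc Val V = Fin y -> 0 < eps ->
  exists C, Cc C /\ V ~> C /\ y - eps <= Val C.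
Proof.
  intros Hy Heps.
  destruct (Rbar_sup_approx Hy Heps) as (x & (C & HC1 & H & ->) & Hle).
  now exists C.
Qed.

Lemma Cost_approx W k eps :
  Cost T Cc Val W = Fin k -> 0 < eps ->
  exists C, Cc C /\ C ~> W /\ Val C <= k + eps.
Proof.
  intros Hk Heps.
  destruct (Rbar_inf_approx Hk Heps) as (x & (C & HC1 & H & ->) & Hle).
  now exists C.
Qed.

Lemma Yield_tight V C0 :
  Ss V -> Cc C0 -> C0 ~> V -> V ~> C0 -> Yield T Cc Val V = Fin (Val C0).
Proof.
  intros HV HC0 H0V HV0. apply Rbar_le_antisym.
  - apply Rbar_sup_lub; intros x (C & HC1 & H & ->). cbn.
    apply Val_le_of_reaches; auto. now apply (reaches_trans_currency (V := V)).
  - apply Rbar_sup_ub. now exists C0.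
Qed.

Lemma Cost_tight V C0 :
  Ss V -> Cc C0 -> C0 ~> V -> V ~> C0 -> Cost T Cc Val V = Fin (Val C0).
Proof.
  intros HV HC0 H0V HV0. apply Rbar_le_antisym.
  - apply Rbar_inf_lb. now exists C0.
  - apply Rbar_inf_glb; intros x (C & HC1 & H & ->). cbn.
    apply Val_le_of_reaches; auto. now apply (reaches_trans_currency (V := V)).
Qed.

End FairCurrency.

Theorem mainTheorem10
  (Omega : Type) (T : elem_map Omega -> Prop)
  (Cc Ss : rset Omega -> Prop) (Val : rset Omega -> R)
  (HT : is_resource_theory T)
  (HC : is_currency T Cc Ss)
  (HVal : is_value_function T Cc Val)
  (Hfair : is_fair T Cc Ss Val) :
  forall V W, Ss V -> Ss W ->
    (forall eps, 0 < eps ->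
       Rbar_le (Rbar_minus (Rbar_minus (Yield T Cc Val V) (Cost T Cc Val W)) (Fin eps))
               (Balance T Cc Val V W)) /\
    ((exists C, Cc C /\ reaches T V C /\ Yield T Cc Val V = Fin (Val C)) ->
     (exists C, Cc C /\ reaches T C W /\ Cost T Cc Val W = Fin (Val C)) ->
       Rbar_le (Rbar_minus (Yield T Cc Val V) (Cost T Cc Val W))
               (Balance T Cc Val V W)) /\
    (tight_for T Cc V -> tight_for T Cc W ->
       Balance T Cc Val V W = Rbar_minus (Yield T Cc Val V) (Cost T Cc Val W) /\
       Rbar_minus (Yield T Cc Val V) (Cost T Cc Val W)
         = Rbar_minus (Cost T Cc Val V) (Cost T Cc Val W)).
Proof.
  intros V W HV HW. split; [|split].
  - intros eps Heps.
    destruct (Yield_finite HT HC HVal HV) as [y Ey].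
    destruct (Cost_finite HC HVal HW) as [k Ek].
    destruct (Yield_approx (eps := eps / 2) Ey) as (Cy & HCy & Hy & Ly); [lra|].
    destruct (Cost_approx (eps := eps / 2) Ek) as (Cw & HCw & Hw & Lw); [lra|].
    rewrite Ey, Ek. apply Rbar_le_trans with (Fin (Val Cy - Val Cw)).
    + cbn. lra.
    + exact (Balance_ge_of_reaches HT HC HVal Hfair HV HW HCy HCw Hy Hw).
  - intros (Cy & HCy & Hy & ->) (Cw & HCw & Hw & ->).
    exact (Balance_ge_of_reaches HT HC HVal Hfair HV HW HCy HCw Hy Hw).
  - intros (C0 & HC0 & H0V & HV0) (D0 & HD0 & HD0W & HWD0).
    rewrite (Yield_tight HT HC HVal HV HC0 H0V HV0),
      (Cost_tight HT HC HVal HV HC0 H0V HV0), (Cost_tight HT HC HVal HW HD0 HD0W HWD0).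
    split; [apply Rbar_le_antisym | reflexivity].
    + exact (Balance_le_of_reaches HT HC HVal Hfair HV HW HC0 HD0 H0V HWD0).
    + exact (Balance_ge_of_reaches HT HC HVal Hfair HV HW HC0 HD0 HV0 HD0W).
Qed.
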